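(* Let $\Omega$ be a state space with finitely many extreme points and positive cone $V_+$, and let $(\cdot,\cdot)$ be an inner product on $V$. Suppose linear maps $J,K:V\to V$ are strictly positive with respect to $(\cdot,\cdot)$ and satisfy $J(V_+)=K(V_+)=V^{*int}_{+(\cdot,\cdot)}$. Then for each extreme point $\omega^{\mathrm{ext}}$ of $\Omega$ there exists $\mu(\omega^{\mathrm{ext}})>0$ such that $K(\omega^{\mathrm{ext}})=\mu(\omega^{\mathrm{ext}})J(\omega^{\mathrm{ext}})$.
   Context: $V=\mathbb R^{N+1}$. A state space $\Omega\subset V$ is a compact convex set with $\mathrm{span}(\Omega)=V$ and $0\notin\mathrm{aff}(\Omega)$; $V_+=\{\lambda\omega:\lambda\ge0,\omega\in\Omega\}$; $V^{*int}_{+(\cdot,\cdot)}=\{y\in V:(x,y)\ge0\ \forall x\in V_+\}$. A linear map $J$ is strictly positive with respect to $(\cdot,\cdot)$ if $(x,Jy)=(Jx,y)$ for all $x,y$ and $(x,Jx)>0$ for all nonzero $x$. *)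

From HB Require Import structures.
From mathcomp Require Import all_boot all_order all_algebra.
From mathcomp Require Import all_classical all_reals all_analysis.
Set Implicit Arguments. Unset Strict Implicit. Unset Printing Implicit Defensive.
Import Order.TTheory GRing.Theory Num.Theory numFieldTopology.Exports.
Local Open Scope classical_set_scope.
Local Open Scope ring_scope.

Section Defs.
Variables (R : realType) (N : nat).
Notation V := 'rV[R]_N.+1.

Definition inner_product (ip : V -> V -> R) : Prop :=
  [/\ forall (a : R) (x y z : V), ip (a *: x + y) z = a * ip x z + ip y z,
      forall x y, ip x y = ip y x
    & forall x, x != 0 -> 0 < ip x x].

Definition convex_set (S : set V) : Prop :=
  forall x y (t : R), S x -> S y -> 0 <= t <= 1 -> S (t *: x + (1 - t) *: y).

Definition spans (S : set V) : Prop :=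
  forall v : V, exists (k : nat) (c : 'I_k -> R) (w : 'I_k -> V),
    (forall i, S (w i)) /\ v = \sum_(i < k) c i *: w i.

Definition in_aff (S : set V) (x : V) : Prop :=
  exists (k : nat) (c : 'I_k -> R) (w : 'I_k -> V),
    [/\ forall i, S (w i), \sum_(i < k) c i = 1 & x = \sum_(i < k) c i *: w i].

Definition state_space (Om : set V) : Prop :=
  [/\ compact Om, convex_set Om, spans Om & ~ in_aff Om 0].

Definition extreme_point (S : set V) (x : V) : Prop :=
  S x /\ forall y z (t : R), S y -> S z -> 0 < t < 1 ->
    x = t *: y + (1 - t) *: z -> y = x /\ z = x.

Definition pos_cone (Om : set V) : set V :=
  [set v | exists (l : R) (w : V), [/\ 0 <= l, Om w & v = l *: w]].

Definition int_dual_cone (ip : V -> V -> R) (Om : set V) : set V :=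
  [set y | forall x, pos_cone Om x -> 0 <= ip x y].

Definition strictly_positive (ip : V -> V -> R) (J : V -> V) : Prop :=
  (forall x y, ip x (J y) = ip (J x) y) /\ (forall x, x != 0 -> 0 < ip x (J x)).

End Defs.

From Pilot Require Import Defs.
From HB Require Import structures.
From mathcomp Require Import all_boot all_order all_algebra.
From mathcomp Require Import all_classical all_reals all_analysis.
Import Order.TTheory GRing.Theory Num.Theory numFieldTopology.Exports.
Local Open Scope classical_set_scope.
Local Open Scope ring_scope.
Set Implicit Arguments. Unset Strict Implicit. Unset Printing Implicit Defensive.

(* Let M be the matrix of J^-1 K, acting on row vectors, so that J (x M) = K x.
   Since J and K map V_+ onto the same cone, M is a linear automorphism of V_+;
   it therefore maps every extreme state to a positive multiple of an extreme
   state.  With finitely many extreme states, some power of M fixes the ray of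
   w: w M^k = r w with r > 0.  On the other hand M is self-adjoint and positive
   for the inner product B(x, y) = (x, J y), because B(x, y M) = (x, K y).  For
   such an operator, an eigenvector of M^k for the eigenvalue m^k > 0 is an
   eigenvector of M for m, whence K w = J (w M) = m J w. *)

Lemma finite_set_pigeonhole (T : Type) (S : set T) (f : nat -> T) :
  finite_set S -> (forall n, S (f n)) -> exists i j, (i < j)%N /\ f i = f j.
Proof.
move=> /finite_setPn finS Sf; apply: contrapT => no_collision; apply: finS.
have f_inj : {in [set: nat] &, injective f}.
  move=> i j _ _ fij; apply/eqP; case: ltngtP => // ij; case: no_collision.
  - by exists i, j.
  - by exists j, i.
rewrite -(card_le_eql (inj_card_eq f_inj)).
by apply: subset_card_le => _ [n _ <-].
Qed.

Section RightLinearForm.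
Variables (R : pzRingType) (U : lmodType R) (B : U -> U -> R).
Hypothesis B_linear : forall x a y z, B x (a *: y + z) = a * B x y + B x z.

Lemma form_linear0r x : B x 0 = 0.
Proof.
have := B_linear x 1 0 0; rewrite scale1r addr0 mul1r.
by move=> /(canLR (addrK _)); rewrite subrr.
Qed.

Lemma form_linearZr x a y : B x (a *: y) = a * B x y.
Proof. by rewrite -[a *: y]addr0 B_linear form_linear0r addr0. Qed.

Lemma form_linear_sumr x I (r : seq I) (P : pred I) (F : I -> U) :
  B x (\sum_(i <- r | P i) F i) = \sum_(i <- r | P i) B x (F i).
Proof.
apply: (big_morph _ _ (form_linear0r x)) => y z.
by rewrite -[y in LHS]scale1r B_linear mul1r.
Qed.

End RightLinearForm.

Section PositiveSelfAdjoint.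
Variables (R : realFieldType) (n : nat).
Variables (B : 'rV[R]_n -> 'rV[R]_n -> R) (M : 'M[R]_n).
Hypothesis B_linear : forall x a y z, B x (a *: y + z) = a * B x y + B x z.
Hypothesis B_definite : forall x, x != 0 -> 0 < B x x.
Hypothesis M_selfadjoint : forall x y, B x (y *m M) = B (x *m M) y.
Hypothesis M_ge0 : forall x, 0 <= B x (x *m M).

Lemma form_ge0 x : 0 <= B x x.
Proof.
by have [->|/B_definite/ltW//] := eqVneq x 0; rewrite (form_linear0r B_linear).
Qed.

Lemma form_mxX_ge0 k x : 0 <= B x (x *m M ^+ k).
Proof.
(* B x (x M^(k+2)) = B (x M) ((x M) M^k): induct on two consecutive powers. *)
suff: 0 <= B x (x *m M ^+ k) /\ 0 <= B x (x *m M ^+ k.+1) by case.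
elim: k x => [|k IHk] x; first by rewrite expr0 expr1 mulmx1 form_ge0 M_ge0.
split; first exact: (IHk x).2.
rewrite exprS exprSr -!mulmxE mulmxA (mulmxA (x *m M)) M_selfadjoint.
exact: (IHk _).1.
Qed.

Lemma eigenvector_root (w : 'rV[R]_n) k m : (0 < k)%N -> 0 < m ->
  w *m M ^+ k = m ^+ k *: w -> w *m M = m *: w.
Proof.
move=> k_gt0 m_gt0 wMk.
(* M^k - m^k = (M - m) S where S = sum_i m^i M^(k-1-i); pairing u = w (M - m)
   with u S = 0 gives a sum of nonnegative terms, among them m^(k-1) B u u. *)
pose u := w *m (M - m%:M).
pose S := \sum_(i < k) M ^+ (k.-1 - i) * m%:M ^+ i.
have uS : u *m S = 0.
  rewrite -mulmxA mulmxE -subrXX_comm; last exact: scalar_mxC.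
  by rewrite mulmxBr wMk -rmorphXn mul_mx_scalar subrr.
have BuS : B u (u *m S) = \sum_(i < k) m ^+ i * B u (u *m M ^+ (k.-1 - i)).
  rewrite mulmx_sumr (form_linear_sumr B_linear); apply: eq_bigr => i _.
  by rewrite -rmorphXn -mulmxE mulmxA mul_mx_scalar (form_linearZr B_linear).
have : m ^+ k.-1 * B u u <= 0.
  rewrite -(form_linear0r B_linear u) -uS BuS -(prednK k_gt0) big_ord_recr /=.
  rewrite subnn expr0 mulmx1 lerDr; apply: sumr_ge0 => i _.
  by rewrite mulr_ge0 ?form_mxX_ge0 // exprn_ge0 // ltW.
rewrite pmulr_rle0 ?exprn_gt0 // => Buu_le0.
have u0 : u = 0 by apply: contraTeq Buu_le0 => /B_definite; rewrite -ltNge.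
by apply/eqP; rewrite -subr_eq0 -mul_mx_scalar -mulmxBr -/u u0.
Qed.

End PositiveSelfAdjoint.

Definition cone_automorphism (R : fieldType) n (C : set 'rV[R]_n) (M : 'M[R]_n) :=
  M \in unitmx /\ (fun x => x *m M) @` C = C.

(* The matrix of J^-1 \o K acting on row vectors. *)
Definition ldiv_mx (R : fieldType) n (J K : {linear 'rV[R]_n -> 'rV[R]_n}) :=
  lin1_mx K *m invmx (lin1_mx J).

Section ConeAutomorphism.
Variables (R : fieldType) (n : nat).
Implicit Types (C : set 'rV[R]_n) (M : 'M[R]_n).
Implicit Types (J K : {linear 'rV[R]_n -> 'rV[R]_n}).

Lemma cone_automorphismV C M :
  cone_automorphism C M -> cone_automorphism C (invmx M).
Proof.
move=> [M_unit MC]; split; first by rewrite unitmx_inv.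
apply/seteqP; split=> [_ [x + <-]|y Cy].
  by rewrite -{1}MC => -[z Cz <-]; rewrite mulmxK.
by exists (y *m M); rewrite ?mulmxK // -MC; exists y.
Qed.

Lemma lin1_mx_unit K : injective K -> lin1_mx K \in unitmx.
Proof.
move=> K_inj; rewrite -row_free_unit; apply: inj_row_free => v.
by rewrite mul_rV_lin1 => Kv0; apply: K_inj; rewrite Kv0 linear0.
Qed.

Lemma ldiv_mxP J K x : injective J -> J (x *m ldiv_mx J K) = K x.
Proof.
move=> J_inj; rewrite -[LHS]mul_rV_lin1 /ldiv_mx -!mulmxA mulVmx ?lin1_mx_unit //.
by rewrite mulmx1 mul_rV_lin1.
Qed.

Lemma ldiv_mx_cone_automorphism C J K : injective J -> injective K ->
  J @` C = K @` C -> cone_automorphism C (ldiv_mx J K).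
Proof.
move=> J_inj K_inj JK; split; first by rewrite unitmx_mul unitmx_inv !lin1_mx_unit.
apply/seteqP; split=> [_ [x Cx <-]|y Cy].
  have : (J @` C) (K x) by rewrite JK; exists x.
  case=> y Cy Jy; suff -> : x *m ldiv_mx J K = y by [].
  by apply: (J_inj); rewrite ldiv_mxP.
have : (K @` C) (J y) by rewrite -JK; exists y.
by case=> x Cx Kx; exists x => //; apply: (J_inj); rewrite ldiv_mxP.
Qed.

End ConeAutomorphism.

Section StateSpace.
Variables (R : realType) (N : nat) (Om : set 'rV[R]_N.+1).
(* Plain [convex_set] would denote the MathComp-Analysis notion. *)
Hypotheses (Om_convex : Defs.convex_set Om) (Om_aff0 : ~ in_aff Om 0).

Lemma affine_pair_neq0 x y a b :
  Om x -> Om y -> a + b = 1 -> a *: x + b *: y != 0.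
Proof.
move=> Ox Oy ab; apply/eqP => xy0; apply: Om_aff0.
exists 2%N, (fun i : 'I_2 => if val i == 0%N then a else b),
  (fun i : 'I_2 => if val i == 0%N then x else y).
by split; [case=> -[|i] | rewrite !big_ord_recl big_ord0 /= addr0..].
Qed.

Lemma state_neq0 x : Om x -> x != 0.
Proof.
move=> Ox; have := affine_pair_neq0 Ox Ox (addr0 1).
by rewrite scale1r scale0r addr0.
Qed.

Lemma state_scale_eq1 x y s : Om x -> Om y -> x = s *: y -> s = 1.
Proof.
move=> Ox Oy xE; apply/eqP/negPn/negP => s_neq1.
have s1_neq0 : 1 - s != 0 by rewrite subr_eq0 eq_sym.
(* x - s y = 0 rescaled to an affine combination of x and y *)
have ab1 : (1 - s)^-1 + - (s / (1 - s)) = 1.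
  by rewrite -mulNr -[X in X + _]mul1r -mulrDl divff.
move: (affine_pair_neq0 Ox Oy ab1).
by rewrite xE scalerA -scalerDl [(1 - s)^-1 * s]mulrC subrr scale0r eqxx.
Qed.

Lemma state_conic_sum1 w y z a b : Om w -> Om y -> Om z -> 0 <= a -> 0 <= b ->
  w = a *: y + b *: z -> a + b = 1.
Proof.
move=> Ow Oy Oz a_ge0 b_ge0 wE.
have ab_gt0 : 0 < a + b.
  rewrite lt_def addr_ge0 // andbT; apply: contraNneq (state_neq0 Ow) => ab0.
  have /andP[/eqP a0 /eqP b0] : (a == 0) && (b == 0) by rewrite -paddr_eq0 // ab0.
  by rewrite wE a0 b0 !scale0r addr0.
pose t := a / (a + b).
have Oyz : Om (t *: y + (1 - t) *: z).
  apply: Om_convex => //; rewrite /t divr_ge0 ?addr_ge0 //=.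
  by rewrite ler_pdivrMr // mul1r lerDl.
apply: (state_scale_eq1 Ow Oyz); rewrite wE scalerDr !scalerA /t.
by rewrite mulrBr mulr1 mulrCA divff ?gt_eqF // mulr1 addrAC subrr add0r.
Qed.

Lemma pos_cone_state x : Om x -> pos_cone Om x.
Proof. by move=> Ox; exists 1, x; rewrite scale1r. Qed.

Lemma pos_cone_neq0 x : pos_cone Om x -> x != 0 ->
  exists l u, [/\ 0 < l, Om u & x = l *: u].
Proof.
case=> l [u [l_ge0 Ou ->]] lu_neq0; exists l, u; split=> //.
by rewrite lt_def l_ge0 andbT; apply: contraNneq lu_neq0 => ->; rewrite scale0r.
Qed.

Lemma cone_automorphism_state M u : cone_automorphism (pos_cone Om) M -> Om u ->
  exists l v, [/\ 0 < l, Om v & u *m M = l *: v].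
Proof.
move=> [M_unit MC] Ou; apply: pos_cone_neq0.
  by rewrite -MC; exists u => //; apply: pos_cone_state.
by apply: contraNneq (state_neq0 Ou) => uM0; rewrite -(mulmxK M_unit u) uM0 mul0mx.
Qed.

Lemma cone_automorphism_extreme M u : cone_automorphism (pos_cone Om) M ->
  extreme_point Om u ->
  exists l v, [/\ 0 < l, extreme_point Om v & u *m M = l *: v].
Proof.
move=> MC [Ou u_ext]; have [l [v [l_gt0 Ov uM]]] := cone_automorphism_state MC Ou.
exists l, v; split=> //; split=> // y z t Oy Oz /andP[t_gt0 t_lt1] vE.
(* Pulled back through M^-1, a splitting of v splits u, whose extremality puts
   both parts on the ray of u, hence of v. *)
have [M_unit _] := MC.
have [a [y' [a_gt0 Oy' yM]]] := cone_automorphism_state (cone_automorphismV MC) Oy.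
have [b [z' [b_gt0 Oz' zM]]] := cone_automorphism_state (cone_automorphismV MC) Oz.
have uE : u = (l * t * a) *: y' + (l * (1 - t) * b) *: z'.
  rewrite -(mulmxK M_unit u) uM vE -scalemxAl mulmxDl -!scalemxAl yM zM.
  by rewrite scalerDr !scalerA.
have ta_gt0 : 0 < l * t * a by rewrite !mulr_gt0.
have tb_gt0 : 0 < l * (1 - t) * b by rewrite !mulr_gt0 // subr_gt0.
have sum1 := state_conic_sum1 Ou Oy' Oz' (ltW ta_gt0) (ltW tb_gt0) uE.
have tbE : l * (1 - t) * b = 1 - l * t * a.
  by rewrite -[in RHS]sum1 addrAC subrr add0r.
have [y'E z'E] : y' = u /\ z' = u.
  apply: (u_ext _ _ (l * t * a)) => //; last by rewrite -tbE.
  by rewrite ta_gt0 -sum1 ltrDl.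
have yE : y = (a * l) *: v.
  by rewrite -(mulmxKV M_unit y) yM y'E -scalemxAl uM scalerA.
have zE : z = (b * l) *: v.
  by rewrite -(mulmxKV M_unit z) zM z'E -scalemxAl uM scalerA.
by rewrite yE zE (state_scale_eq1 Oy Ov yE) (state_scale_eq1 Oz Ov zE) !scale1r.
Qed.

Lemma cone_automorphism_extremeX M u k : cone_automorphism (pos_cone Om) M ->
  extreme_point Om u ->
  exists c v, [/\ 0 < c, extreme_point Om v & u *m M ^+ k = c *: v].
Proof.
move=> MC u_ext; elim: k => [|k [c [v [c_gt0 v_ext uMk]]]].
  by exists 1, u; rewrite expr0 mulmx1 scale1r.
have [l [v' [l_gt0 v'_ext vM]]] := cone_automorphism_extreme MC v_ext.
exists (c * l), v'; split=> //; first exact: mulr_gt0.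
by rewrite exprSr -mulmxE mulmxA uMk -scalemxAl vM scalerA.
Qed.

Lemma cone_automorphism_periodic M w : cone_automorphism (pos_cone Om) M ->
  finite_set [set x | extreme_point Om x] -> extreme_point Om w ->
  exists k r, [/\ (0 < k)%N, 0 < r & w *m M ^+ k = r *: w].
Proof.
move=> MC finE w_ext.
have /choice[f fP] k : exists v,
    extreme_point Om v /\ exists2 c, 0 < c & w *m M ^+ k = c *: v.
  have [c [v [c_gt0 v_ext wMk]]] := cone_automorphism_extremeX k MC w_ext.
  by exists v; split=> //; exists c.
have [i [j [ij fij]]] := finite_set_pigeonhole finE (fun k => (fP k).1).
have [_ [ci ci_gt0 wMi]] := fP i; have [_ [cj cj_gt0 wMj]] := fP j.
exists (j - i)%N, (cj / ci); split; rewrite ?subn_gt0 ?divr_gt0 //.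
have Mi_unit : M ^+ i \in unitmx by apply: unitrX; case: MC.
apply: (can_inj (mulmxK Mi_unit)).
rewrite -mulmxA mulmxE -exprD subnK ?(ltnW ij) //.
by rewrite wMj -scalemxAl wMi scalerA mulfVK ?gt_eqF // fij.
Qed.

End StateSpace.

Lemma inner_product_linearr (R : realType) (N : nat)
    (ip : 'rV[R]_N.+1 -> 'rV[R]_N.+1 -> R) :
  inner_product ip -> forall z a x y, ip z (a *: x + y) = a * ip z x + ip z y.
Proof.
by case=> ip_linearl ip_sym _ z a x y; rewrite !(ip_sym z) ip_linearl.
Qed.

Section StrictlyPositive.
Variables (R : realType) (N : nat) (ip : 'rV[R]_N.+1 -> 'rV[R]_N.+1 -> R).
Variable J : {linear 'rV[R]_N.+1 -> 'rV[R]_N.+1}.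
Hypotheses (ipP : inner_product ip) (J_pos : strictly_positive ip J).

Lemma strictly_positive_ge0 x : 0 <= ip x (J x).
Proof.
have [->|/(proj2 J_pos)/ltW//] := eqVneq x 0.
by rewrite linear0 (form_linear0r (inner_product_linearr ipP)).
Qed.

Lemma strictly_positive_inj : injective J.
Proof.
move=> x y Jxy; apply/eqP; rewrite -subr_eq0; apply/negPn/negP => /(proj2 J_pos).
by rewrite linearB /= Jxy subrr (form_linear0r (inner_product_linearr ipP)) ltxx.
Qed.

End StrictlyPositive.

Theorem lemmaB4 (R : realType) (N : nat) (Om : set 'rV[R]_N.+1)
  (ip : 'rV[R]_N.+1 -> 'rV[R]_N.+1 -> R)
  (J K : {linear 'rV[R]_N.+1 -> 'rV[R]_N.+1}) :
  state_space Om ->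
  finite_set [set x | extreme_point Om x] ->
  inner_product ip ->
  strictly_positive ip J -> strictly_positive ip K ->
  J @` pos_cone Om = int_dual_cone ip Om ->
  K @` pos_cone Om = int_dual_cone ip Om ->
  forall w, extreme_point Om w ->
    exists mu : R, 0 < mu /\ K w = mu *: J w.
Proof.
move=> [_ Om_convex _ Om_aff0] finE ipP J_pos K_pos JOm KOm w w_ext.
have J_inj := strictly_positive_inj ipP J_pos.
pose M := ldiv_mx J K.
have JM x : J (x *m M) = K x by apply: ldiv_mxP.
have MC : cone_automorphism (pos_cone Om) M.
  apply: ldiv_mx_cone_automorphism; rewrite ?JOm ?KOm //.
  exact: strictly_positive_inj K_pos.
have [k [r [k_gt0 r_gt0 wMk]]] :=
  cone_automorphism_periodic Om_convex Om_aff0 MC finE w_ext.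
pose m := r `^ k%:R^-1.
have m_gt0 : 0 < m by rewrite powR_gt0.
have mk : m ^+ k = r.
  by rewrite -powR_mulrn ?powR_ge0 // -powRrM mulVf ?powRr1 ?ltW // pnatr_eq0 -lt0n.
pose B x y := ip x (J y).
have B_linear x a y z : B x (a *: y + z) = a * B x y + B x z.
  by rewrite /B linearP inner_product_linearr.
have M_selfadjoint x y : B x (y *m M) = B (x *m M) y.
  by rewrite /B JM (proj1 K_pos) (proj1 J_pos) JM.
have M_ge0 x : 0 <= B x (x *m M) by rewrite /B JM strictly_positive_ge0.
have wM : w *m M = m *: w.
  apply: (eigenvector_root B_linear (proj2 J_pos) M_selfadjoint M_ge0 k_gt0 m_gt0).
  by rewrite mk.
by exists m; split=> //; rewrite -JM wM linearZ.
Qed.
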